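(* Let $d,K,n$ be positive integers with $K\ge 2$. For $\tau>0$ let $$F_\tau(\mathbf W,\mathbf H)=\frac{1}{nK}\sum_{k=1}^{K}\sum_{i=1}^{n}\mathcal L_{\mathrm{CE}}(\mathbf W^\top \mathbf h_{k,i},\mathbf y_k,\tau),$$ and let $\mathcal S_\tau=\operatorname{argmin}\{F_\tau(\mathbf W,\mathbf H):\mathbf W\in\mathrm{OB}(d,K),\ \mathbf H\in \mathrm{OB}(d,nK)\}$. Then $$\limsup_{\tau\to 0}\mathcal S_\tau\ \subseteq\ \operatorname{argmin}_{\mathbf W\in\mathrm{OB}(d,K),\ \mathbf H\in\mathrm{OB}(d,nK)}\mathcal L_{\mathrm{HardMax}}(\mathbf W,\mathbf H).$$
   Context: $\mathrm{OB}(d,m)$ denotes the set of real $d\times m$ matrices all of whose columns have unit Euclidean norm. A matrix $\mathbf W\in\mathrm{OB}(d,K)$ has columns $\mathbf w_1,\dots,\mathbf w_K$; a matrix $\mathbf H\in\mathrm{OB}(d,nK)$ has columns indexed as $\mathbf h_{k,i}$, $k\in[K]$, $i\in[n]$. $\mathbf y_k\in\mathbb R^K$ is the $k$-th standard basis vector. For $\mathbf z\in\mathbb R^K$, $\mathcal L_{\mathrm{CE}}(\mathbf z,\mathbf y_k,\tau)=-\log\big(\exp(z_k/\tau)/\sum_{j=1}^K\exp(z_j/\tau)\big)$. The HardMax loss is $\mathcal L_{\mathrm{HardMax}}(\mathbf W,\mathbf H)=\max_{k\in[K]}\max_{i\in[n]}\max_{k'\ne k}\langle \mathbf w_{k'}-\mathbf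 w_k,\mathbf h_{k,i}\rangle$. The $\limsup$ of sets as $\tau\to0$ is the (Painlevé–Kuratowski) outer limit: the set of all limit points of sequences $x_j\in\mathcal S_{\tau_j}$ with $\tau_j\to 0$. *)

From HB Require Import structures.
From mathcomp Require Import all_boot all_order all_algebra.
From mathcomp Require Import all_classical all_reals all_analysis.
Unset Printing Implicit Defensive.
Import Order.TTheory GRing.Theory Num.Theory.
Import numFieldNormedType.Exports.
Local Open Scope classical_set_scope.
Local Open Scope ring_scope.

Section Defs.
Variable R : realType.

Definition OB (d m : nat) : set 'M[R]_(d, m) :=
  [set A | forall j : 'I_m, \sum_(l < d) (A l j) ^+ 2 = 1].

Definition hcol (d K n : nat) (H : 'M[R]_(d, K * n)) (k : 'I_K) (i : 'I_n)
  : 'cV[R]_d := col (mxvec_index k i) H.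

Definition CE (K : nat) (z : 'cV[R]_K) (k : 'I_K) (tau : R) : R :=
  - ln (expR (z k 0 / tau) / \sum_(j < K) expR (z j 0 / tau)).

Definition Ftau (d K n : nat) (tau : R) (W : 'M[R]_(d, K)) (H : 'M[R]_(d, K * n)) : R :=
  (n * K)%:R^-1 * \sum_(k < K) \sum_(i < n) CE K (W^T *m hcol d K n H k i) k tau.

Definition argmin_on (T : Type) (S : set T) (f : T -> R) : set T :=
  [set x | S x /\ forall y, S y -> f x <= f y].

Definition argmin_on_e (T : Type) (S : set T) (f : T -> \bar R) : set T :=
  [set x | S x /\ forall y, S y -> (f x <= f y)%E].

Definition OBpair (d K n : nat) : set ('M[R]_(d, K) * 'M[R]_(d, K * n)) :=
  [set p | OB d K p.1 /\ OB d (K * n) p.2].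

Definition S_tau (d K n : nat) (tau : R) : set ('M[R]_(d, K) * 'M[R]_(d, K * n)) :=
  @argmin_on ('M[R]_(d, K) * 'M[R]_(d, K * n)) (OBpair d K n)
    (fun p => Ftau d K n tau p.1 p.2).

(* HardMax loss: max over k, i, k' <> k of <w_k' - w_k, h_{k,i}>,
   computed in the extended reals (-oo is the neutral element of max;
   the index set is nonempty when K >= 2 and n >= 1). *)
Definition HardMax (d K n : nat) (W : 'M[R]_(d, K)) (H : 'M[R]_(d, K * n)) : \bar R :=
  \big[Order.max/-oo%E]_(k < K) \big[Order.max/-oo%E]_(i < n)
    \big[Order.max/-oo%E]_(k' < K | k' != k)
      (\sum_(l < d) (W l k' - W l k) * hcol d K n H k i l 0)%:E.

(* Painleve-Kuratowski outer limit as tau -> 0+ of a family of sets S_tau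
   (tau > 0): limits of sequences x_j in S_(tau_j) with tau_j -> 0. *)
Definition outer_limit_0 (T : topologicalType) (S : R -> set T) : set T :=
  [set x | exists (tau : nat -> R) (xs : nat -> T),
     (forall j, 0 < tau j) /\ tau @ \oo --> (0 : R) /\
     (forall j, S (tau j) (xs j)) /\ xs @ \oo --> x].

End Defs.

From HB Require Import structures.
From mathcomp Require Import all_boot all_order all_algebra.
From mathcomp Require Import all_classical all_reals all_analysis.
From mathcomp Require Import ring lra.
Import Order.TTheory GRing.Theory Num.Theory.
Import numFieldNormedType.Exports.
Local Open Scope classical_set_scope.
Local Open Scope ring_scope.

(* Write m_{k,i,k'} = <w_k' - w_k, h_{k,i}> for the margins, so that HardMax is
   their maximum.  Each cross-entropy term is bounded below by softplus(m/tau)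
   for any one of its margins m, and above by K exp(c/tau) when all its margins
   are at most c.  Suppose a limit x of minimisers x_j of F_(tau_j) had a margin
   A exceeding HardMax at a feasible y.  Take a feasible competitor z all of whose
   margins are at most some c <= 0 with c < A: y itself, or the point whose
   columns all equal e_1 (all margins 0).  Minimality of x_j against z gives
   softplus(m_j/tau_j) <= nK^2 exp(c/tau_j) with m_j -> A; multiplied by tau_j
   this forces A <= 0, and after taking logarithms it forces min(A,0) <= c,
   hence A <= c, a contradiction.  That x is feasible follows from the
   closedness of the oblique manifold. *)

Section Softplus.
Context {R : realType}.

Definition softplus (u : R) : R := ln (1 + expR u).

Lemma softplus_ge (u : R) : u <= softplus u.
Proof.
have eu_gt0 := expR_gt0 u.
by rewrite -{1}(expRK u) ler_ln ?posrE ?lerDr //; lra.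
Qed.

Lemma ln1D_ge {v : R} : 0 <= v -> v / (1 + v) <= ln (1 + v).
Proof.
move=> v_ge0; have v1_gt0 : 0 < 1 + v by lra.
have inv_v1 : (1 + v)^-1 = 1 + - (v / (1 + v)) by field; exact: lt0r_neq0.
have := @le_ln1Dx _ (- (v / (1 + v))).
rewrite -inv_v1 lnV ?posrE // lerNl opprK; apply.
by rewrite ltrNl opprK ltr_pdivrMr // mul1r; lra.
Qed.

Lemma softplus_ge_expR_min (u : R) : expR (Num.min u 0) / 2 <= softplus u.
Proof.
set v := expR (Num.min u 0).
have v_gt0 : 0 < v := expR_gt0 _.
have v_le1 : v <= 1 by rewrite /v expR_le1 ge_min lexx orbT.
have v_le_eu : v <= expR u by rewrite /v ler_expR ge_min lexx.
have half_le : v / 2 <= v / (1 + v).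
  by rewrite ler_pM2l // lef_pV2 ?posrE ?lerD2l //; lra.
have ln_le : ln (1 + v) <= softplus u.
  by rewrite ler_ln ?posrE ?lerD2l //; have := expR_gt0 u; lra.
exact: le_trans half_le (le_trans (ln1D_ge (ltW v_gt0)) ln_le).
Qed.

Lemma le0_of_cvg_le_mul (C a : R) (u tau : nat -> R) :
  tau @ \oo --> 0 -> u @ \oo --> a -> (forall j, u j <= C * tau j) -> a <= 0.
Proof.
move=> tau0 ua le_u; have Ctau0 : (fun j => C * tau j) @ \oo --> 0.
  by rewrite -(mulr0 C); apply: cvgMr.
by apply: (ler_cvg_to ua Ctau0); apply: nearW.
Qed.

Lemma cvg_le_of_softplus_le (C c a : R) (tau m : nat -> R) :
  0 <= C -> c <= 0 -> (forall j, 0 < tau j) -> tau @ \oo --> 0 -> m @ \oo --> a ->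
  (forall j, softplus (m j / tau j) <= C * expR (c / tau j)) -> a <= c.
Proof.
move=> C_ge0 c_le0 tau_gt0 tau0 ma le_m.
have ec_le1 j : expR (c / tau j) <= 1.
  by rewrite expR_le1 pmulr_lle0 ?invr_gt0.
have a_le0 : a <= 0.
  apply: le0_of_cvg_le_mul (C) _ _ _ tau0 ma _ => j.
  have := le_trans (softplus_ge _) (le_m j).
  rewrite ler_pdivrMr // => /le_trans; apply.
  by rewrite ler_wpM2r ?ler_piMr // ltW.
have min_a_le : Num.min a 0 - c <= 0.
  apply: le0_of_cvg_le_mul (2 * C) _ (fun j => Num.min (m j) 0 - c) _ tau0 _ _.
    apply: cvgB; last exact: cvg_cst.
    exact: cvg_comp (cvg_pair ma (cvg_cst 0)) (@min_continuous _ R (a, 0)).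
  move=> j; set s := Num.min (m j) 0 - c.
  have := le_trans (softplus_ge_expR_min _) (le_m j).
  have ec_gt0 := expR_gt0 (c / tau j).
  have t_gt0 := tau_gt0 j.
  have -> : Num.min (m j / tau j) 0 = s / tau j + c / tau j.
    by rewrite -mulrDl subrK minr_pMl ?invr_ge0 ?ltW // mul0r.
  rewrite expRD => h.
  have es_le : expR (s / tau j) <= 2 * C.
    by rewrite -(ler_pM2r ec_gt0); lra.
  have := expR_ge1Dx (s / tau j).
  rewrite -ler_pdivrMr //; lra.
by move: min_a_le; rewrite min_l // subr_le0.
Qed.

End Softplus.

Section CrossEntropy.
Context {R : realType} {K : nat}.
Implicit Types (z : 'cV[R]_K) (k : 'I_K) (tau : R).

Lemma CE_lnsumexp z k tau :
  CE R K z k tau = ln (\sum_j expR ((z j 0 - z k 0) / tau)).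
Proof.
have sum_gt0 : 0 < \sum_(j < K) expR (z j 0 / tau).
  by rewrite (bigD1 k) //= ltr_pwDl ?expR_gt0 ?sumr_ge0 // => j _; exact: expR_ge0.
rewrite /CE -lnV ?posrE ?divr_gt0 ?expR_gt0 // invf_div -expRN mulr_suml.
by congr ln; apply: eq_bigr => j _; rewrite -expRD mulrBl.
Qed.

Lemma sumexp_split z k tau :
  \sum_j expR ((z j 0 - z k 0) / tau) =
  1 + \sum_(j | j != k) expR ((z j 0 - z k 0) / tau).
Proof. by rewrite (bigD1 k) //= subrr mul0r expR0. Qed.

Lemma CE_ge0 z k tau : 0 <= CE R K z k tau.
Proof.
rewrite CE_lnsumexp sumexp_split ln_ge0 // lerDl.
by rewrite sumr_ge0 // => j _; exact: expR_ge0.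
Qed.

Lemma softplus_le_CE z k j tau : j != k ->
  softplus ((z j 0 - z k 0) / tau) <= CE R K z k tau.
Proof.
move=> jk; rewrite CE_lnsumexp sumexp_split ler_ln ?posrE; first last.
- by rewrite ltr_pwDl ?sumr_ge0 // => *; exact: expR_ge0.
- by rewrite ltr_pwDl ?expR_gt0.
rewrite lerD2l (bigD1 j) //= lerDl.
by rewrite sumr_ge0 // => *; exact: expR_ge0.
Qed.

Lemma CE_le z k tau c : 0 < tau -> (forall j, j != k -> z j 0 - z k 0 <= c) ->
  CE R K z k tau <= K%:R * expR (c / tau).
Proof.
move=> tau_gt0 le_c; rewrite CE_lnsumexp sumexp_split.
set S := \sum_(j | j != k) _.
have S_ge0 : 0 <= S by rewrite sumr_ge0 // => *; exact: expR_ge0.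
apply: (le_trans (le_ln1Dx _)); first lra.
apply: (@le_trans _ _ (\sum_(j | j != k) expR (c / tau))).
  by apply: ler_sum => j jk; rewrite ler_expR ler_pM2r ?invr_gt0 ?le_c.
rewrite -[K in K%:R]card_ord mulr_natl -sumr_const [leRHS](bigD1 k) //= lerDr.
exact: expR_ge0.
Qed.

End CrossEntropy.

Section PairEntries.
Context {R : numFieldType} {m1 n1 m2 n2 : nat}.

Lemma fst_entry_continuous a b :
  continuous (fun p : 'M[R]_(m1, n1) * 'M[R]_(m2, n2) => p.1 a b).
Proof.
by move=> p; apply: (@continuous_comp _ _ _ fst (fun M : 'M[R]_(m1, n1) => M a b));
  [exact: cvg_fst | exact: coord_continuous].
Qed.

Lemma snd_entry_continuous a b :
  continuous (fun p : 'M[R]_(m1, n1) * 'M[R]_(m2, n2) => p.2 a b).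
Proof.
by move=> p; apply: (@continuous_comp _ _ _ snd (fun M : 'M[R]_(m2, n2) => M a b));
  [exact: cvg_snd | exact: coord_continuous].
Qed.

End PairEntries.

Section Margins.
Context {R : realType} {d K n : nat}.
Implicit Types (W : 'M[R]_(d, K)) (H : 'M[R]_(d, K * n)).

Definition margin W H (k : 'I_K) (i : 'I_n) (k' : 'I_K) : R :=
  \sum_(l < d) (W l k' - W l k) * hcol R d K n H k i l 0.

Lemma logit_gap_margin W H k i j :
  (W^T *m hcol R d K n H k i) j 0 - (W^T *m hcol R d K n H k i) k 0 = margin W H k i j.
Proof. by rewrite !mxE -sumrB; apply: eq_bigr => l _; rewrite !mxE mulrBl. Qed.

Lemma softplus_margin_le_Ftau tau W H k i k' : k' != k ->
  (n * K)%:R^-1 * softplus (margin W H k i k' / tau) <= Ftau R d K n tau W H.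
Proof.
move=> k'k; rewrite /Ftau ler_wpM2l ?invr_ge0 //.
rewrite -logit_gap_margin; apply: le_trans (softplus_le_CE _ _ _ _ k'k) _.
rewrite (bigD1 k) //= (bigD1 i) //= -addrA lerDl addr_ge0 ?sumr_ge0 // => *.
  exact: CE_ge0.
by rewrite sumr_ge0 // => *; exact: CE_ge0.
Qed.

Lemma Ftau_le tau W H c : (0 < n)%N -> (0 < K)%N -> 0 < tau ->
  (forall k i j, j != k -> margin W H k i j <= c) ->
  Ftau R d K n tau W H <= K%:R * expR (c / tau).
Proof.
move=> n_gt0 K_gt0 tau_gt0 le_c; set B := K%:R * expR (c / tau).
have CE_leB k i : CE R K (W^T *m hcol R d K n H k i) k tau <= B.
  by apply: CE_le => // j jk; rewrite logit_gap_margin le_c.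
apply: (@le_trans _ _ ((n * K)%:R^-1 * \sum_(k < K) \sum_(i < n) B)).
  by rewrite ler_wpM2l ?invr_ge0 //; do 2!apply: ler_sum => * //.
rewrite !sumr_const !card_ord -mulrnA -[B *+ _]mulr_natl mulKf //.
by rewrite pnatr_eq0 -lt0n muln_gt0 n_gt0.
Qed.

Local Open Scope ereal_scope.

Lemma margin_le_HardMax W H k i k' : k' != k ->
  (margin W H k i k')%:E <= HardMax R d K n W H.
Proof.
move=> k'k; apply: (bigmax_sup k) => //; apply: (bigmax_sup i) => //.
exact: (le_bigmax_cond _ (fun j => (margin W H k i j)%:E) k'k).
Qed.

Lemma HardMax_le W H (b : \bar R) :
  (forall k i k', k' != k -> (margin W H k i k')%:E <= b) -> HardMax R d K n W H <= b.
Proof.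
move=> le_b; apply/bigmax_leP; split => [|k _]; first exact: leNye.
apply/bigmax_leP; split => [|i _]; first exact: leNye.
by apply/bigmax_leP; split => [|k' k'k]; [exact: leNye | exact: le_b].
Qed.

Local Close Scope ereal_scope.

Lemma margin_continuous k i k' :
  continuous (fun p : 'M[R]_(d, K) * 'M[R]_(d, K * n) => margin p.1 p.2 k i k').
Proof.
apply: continuous_big => [|l _ p]; first exact: add_continuous.
rewrite /hcol; under eq_fun do rewrite mxE.
by apply: cvgM; [apply: cvgB|]; [exact: fst_entry_continuous..|exact: snd_entry_continuous].
Qed.

End Margins.

Section Oblique.
Variable R : realType.

Lemma closed_OB d m : closed (OB R d m).
Proof.
have -> : OB R d m =
    \bigcap_(j in [set: 'I_m])
      ((fun A : 'M[R]_(d, m) => \sum_(l < d) A l j ^+ 2) @^-1` [set 1]).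
  by apply/seteqP; split=> [A OA j _|A OA j] //=; exact: OA.
apply: closed_bigI => j _; apply: closed_comp => [A _|]; last exact: closed_eq.
apply: continuous_big => [|l _ B]; first exact: add_continuous.
exact: (continuousM (@coord_continuous R _ _ l j B) (@coord_continuous R _ _ l j B)).
Qed.

Lemma closed_OBpair d K n : closed (OBpair R d K n).
Proof.
apply: closedI; apply: closed_comp => [p _|]; try exact: closed_OB.
- exact: cvg_fst.
- exact: cvg_snd.
Qed.

Definition e0_cols d m : 'M[R]_(d, m) := \matrix_(l < d, j < m) ((l : nat) == 0)%:R.

Lemma e0_cols_OB d m : (0 < d)%N -> OB R d m (e0_cols d m).
Proof.
move=> d_gt0 j; rewrite (bigD1 (Ordinal d_gt0)) //= mxE expr1n big1 ?addr0 // => l l0.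
by rewrite mxE; case: eqP => [l0'|_]; [case/eqP: l0; apply: val_inj | rewrite expr0n].
Qed.

Lemma margin_e0_cols d K n (H : 'M[R]_(d, K * n)) k i j :
  margin (e0_cols d K) H k i j = 0.
Proof. by rewrite /margin big1 // => l _; rewrite !mxE subrr mul0r. Qed.

End Oblique.

Section VanishingTemperature.
Context {R : realType} {d K n : nat}.
Notation pair := ('M[R]_(d, K) * 'M[R]_(d, K * n))%type.

Lemma nonpos_margin_competitor {y : pair} {A : R} : (0 < d)%N ->
  OBpair R d K n y -> (HardMax R d K n y.1 y.2 < A%:E)%E ->
  exists (z : pair) (c : R), [/\ OBpair R d K n z, c <= 0, c < A &
    forall k i j, j != k -> margin z.1 z.2 k i j <= c].
Proof.
move=> d_gt0 Oy HardMax_lt.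
have [b [b_lt le_b]] :
    exists b, b < A /\ forall k i j, j != k -> margin y.1 y.2 k i j <= b.
  move: HardMax_lt (@margin_le_HardMax _ _ _ _ y.1 y.2).
  case: (HardMax R d K n y.1 y.2) => [b | | ] HardMax_lt le_HardMax.
  - by exists b; split=> [|k i j jk]; rewrite -?lte_fin -?lee_fin ?le_HardMax.
  - by rewrite ltNge leey in HardMax_lt.
  - exists (A - 1); split=> [|k i j jk]; first lra.
    by have := le_HardMax k i j jk; rewrite leeNy_eq.
have [b_le0 | b_gt0] := lerP b 0; first by exists y, b.
exists (e0_cols R d K, e0_cols R d (K * n)), 0; split.
- by split; apply: e0_cols_OB.
- by [].
- exact: lt_trans b_gt0 b_lt.
- by move=> k i j _; rewrite margin_e0_cols.
Qed.

Lemma limit_margin_le {tau : nat -> R} {xs : nat -> pair} {x z : pair} {c : R} k i k' :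
  (0 < n)%N -> (0 < K)%N -> (forall j, 0 < tau j) -> tau @ \oo --> 0 ->
  (forall j, S_tau R d K n (tau j) (xs j)) -> xs @ \oo --> x ->
  OBpair R d K n z -> c <= 0 -> (forall k i j, j != k -> margin z.1 z.2 k i j <= c) ->
  k' != k -> margin x.1 x.2 k i k' <= c.
Proof.
move=> n_gt0 K_gt0 tau_gt0 tau0 xs_min xsx Oz c_le0 le_c k'k.
have N_gt0 : 0 < (n * K)%:R :> R by rewrite ltr0n muln_gt0 n_gt0.
set m := fun j => margin (xs j).1 (xs j).2 k i k'.
have mx : m @ \oo --> margin x.1 x.2 k i k'.
  exact: continuous_cvg (margin_continuous k i k' x) xsx.
apply: (@cvg_le_of_softplus_le _ ((n * K)%:R * K%:R) c _ tau m _
  c_le0 tau_gt0 tau0 mx) => [|j].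
  by rewrite mulr_ge0 // ltW.
rewrite -mulrA -ler_pdivrMl //.
apply: le_trans (softplus_margin_le_Ftau _ _ _ _ _ _ k'k) _.
case: (xs_min j) => _ /(_ z Oz) /le_trans; apply.
exact: Ftau_le (tau_gt0 j) le_c.
Qed.

End VanishingTemperature.

Theorem mainTheorem1 (R : realType) (d K n : nat) :
  (0 < d)%N -> (0 < n)%N -> (2 <= K)%N ->
  outer_limit_0 R _ (fun tau : R => S_tau R d K n tau)
    `<=` argmin_on_e R ('M[R]_(d, K) * 'M[R]_(d, K * n)) (OBpair R d K n) (fun p : 'M[R]_(d, K) * 'M[R]_(d, K * n) => HardMax R d K n p.1 p.2).
Proof.
move=> d_gt0 n_gt0 K_ge2 x [tau [xs [tau_gt0 [tau0 [xs_min xsx]]]]].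
have K_gt0 : (0 < K)%N by apply: leq_trans K_ge2.
have Ox : OBpair R d K n x.
  apply: (closed_cvg _ (closed_OBpair R d K n) _ _ xsx).
  by apply: nearW => j; case: (xs_min j).
split=> // y Oy; apply: HardMax_le => k i k' k'k.
rewrite leNgt; apply/negP => /(nonpos_margin_competitor d_gt0 Oy).
move=> [z [c [Oz c_le0 c_lt le_c]]].
have := limit_margin_le k i k' n_gt0 K_gt0 tau_gt0 tau0 xs_min xsx Oz c_le0 le_c k'k.
by rewrite leNgt c_lt.
Qed.
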